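(* Let $\mathbf d=(d_1,\ldots,d_n)$ be a degree sequence with $n\ge2$ and let $v\in[n]$. Then for every $1\le k\le n-1$, \[\mathbb P(\mathfrak s_n(v)>k)=\frac{1}{\langle n\rangle_k}\sum_{(i_1,\ldots,i_k)\in J_{n,k}(v)}\ \prod_{j=1}^k d_{i_j},\] where $\langle n\rangle_k=n!/(n-k)!$ and $J_{n,k}(v)=\{(j_1,\ldots,j_k)\in([n]\setminus\{v\})^k: j_\ell\ne j_m\text{ for }\ell\ne m\}$.
   Context: A degree sequence is $\mathbf d=(d_1,\ldots,d_n)\in\mathbb N_0^n$ with $\sum_j d_j=n$. Let $\mathfrak F(\mathbf d)=\{f:[n]\to[n]: |f^{-1}(\{i\})|=d_i\ \forall i\}$ and let $F$ be uniform on $\mathfrak F(\mathbf d)$. For $f:V\to V$, $v\in V$, the six-length is $\mathfrak s_f(v)=\min\{k\in\mathbb N: f^{(k)}(v)\in\{f^{(j)}(v):0\le j\le k-1\}\}$ ($f^{(k)}$ the $k$-fold composition, $f^{(0)}=\mathrm{id}$); $\mathfrak s_n(v)=\mathfrak s_F(v)$. *)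

From HB Require Import structures.
From mathcomp Require Import all_boot all_order all_algebra.
Set Implicit Arguments. Unset Strict Implicit. Unset Printing Implicit Defensive.
Import Order.TTheory GRing.Theory Num.Theory.

(* "six-length": s_f(v) = min { k >= 1 : f^(k)(v) \in {f^(j)(v) : 0 <= j <= k-1} }.
   On a finite type such a k always exists and is <= #|T| (pigeonhole), so the
   minimum is computed as the first k in 1..#|T| satisfying the predicate. *)
Definition sixlen (T : finType) (f : T -> T) (v : T) : nat :=
  (find (fun k => iter k f v \in [seq iter j f v | j <- iota 0 k]) (iota 1 #|T|)).+1.

Definition degseq (n : nat) (d : 'I_n -> nat) : Prop := \sum_(i < n) d i = n.

Definition Fd (n : nat) (d : 'I_n -> nat) : {set {ffun 'I_n -> 'I_n}} :=
  [set f : {ffun 'I_n -> 'I_n} | [forall i, #|[set x | f x == i]| == d i]].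

Definition prob_sixlen_gt (n : nat) (d : 'I_n -> nat) (v : 'I_n) (k : nat) : rat :=
  (#|[set f in Fd d | (k < sixlen f v)%N]|%:R / #|Fd d|%:R)%R.

Definition J (n k : nat) (v : 'I_n) : {set {ffun 'I_k -> 'I_n}} :=
  [set t : {ffun 'I_k -> 'I_n} | injectiveb t && [forall l, t l != v]].

From HB Require Import structures.
From mathcomp Require Import all_boot all_order all_algebra perm ring.
Import GRing.Theory Num.Theory.
Set Implicit Arguments. Unset Strict Implicit.

(* The event [k < s_F(v)] says that the first k steps v -> t_1 -> ... -> t_k of
   the orbit of v visit k distinct points different from v, i.e. that F satisfies
   the k constraints v |-> t_1, t_1 |-> t_2, ..., t_(k-1) |-> t_k for a unique
   tuple t in J_(n,k)(v).  Prescribing f on m points, with pairwise distinct images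
   y_1, ..., y_m, selects a fraction (n - m)! / n! * d_(y_1) ... d_(y_m) of F(d):
   adding one constraint x |-> y to such a family, the number of its members with
   f(x') = y does not depend on the free point x' (compose with the transposition
   (x x')), and summing over the n - m free points x' counts every member d_y
   times, since y has d_y preimages and none of them is constrained. *)

Lemma map_iter_iota (T : Type) (f : T -> T) x m :
  [seq iter j f x | j <- iota 0 m] = traject f x m.
Proof. by elim: m => // m IHm; rewrite -addn1 iotaD map_cat IHm addn1 trajectSr cats1. Qed.

Lemma uniq_traject_has (T : eqType) (f : T -> T) x k :
  uniq (traject f x k.+1) = ~~ has (fun m => iter m f x \in traject f x m) (iota 1 k).
Proof.
elim: k => // k IHk; rewrite trajectSr rcons_uniq IHk -addn1 iotaD has_cat has_seq1.
by rewrite add1n addn1 negb_or andbC.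
Qed.

Lemma sixlen_gt (T : finType) (f : T -> T) x k :
  k < #|T| -> (k < sixlen f x) = uniq (traject f x k.+1).
Proof.
move=> lt_k_T; rewrite /sixlen ltnS uniq_traject_has.
under eq_find => m do rewrite map_iter_iota.
have -> : iota 1 k = take k (iota 1 #|T|) by rewrite take_iota (minn_idPl (ltnW lt_k_T)).
by rewrite has_take_leq ?size_iota ?(ltnW lt_k_T) // -leqNgt.
Qed.

Lemma all_zip_belast_fpath (T : eqType) (f : T -> T) x s :
  all (fun p => f p.1 == p.2) (zip (belast x s) s) = fpath f x s.
Proof. by elim: s x => //= y s IHs x; rewrite IHs. Qed.

Lemma codom_ffun_inj (aT : finType) (rT : eqType) :
  injective (fun t : {ffun aT -> rT} => codom t).
Proof.
move=> t t' /=; rewrite !codom_ffun => /val_inj eq_tt'.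
by rewrite -[t]fgraphK eq_tt' fgraphK.
Qed.

Lemma codom_iterS (T : Type) (f : T -> T) x k :
  codom [ffun j : 'I_k => iter j.+1 f x] = traject f (f x) k.
Proof.
rewrite codomE (eq_map (ffunE _)) -[RHS]map_iter_iota -val_enum_ord -map_comp.
by apply: eq_map => j; rewrite /= -iterS iterSr.
Qed.

Lemma in_J n k (v : 'I_n) (t : {ffun 'I_k -> 'I_n}) :
  (t \in J k v) = uniq (v :: codom t).
Proof.
rewrite inE andbC /=; congr (_ && _); apply/forallP/idP => [t_v | v_t l].
  by apply/codomP => -[l tl]; move: (t_v l); rewrite -tl eqxx.
by apply: contraNneq v_t => <-; apply: codom_f.
Qed.

Lemma card_involutive_eq (T : finType) (h : T -> T) (A B : {set T}) :
  involutive h -> {in A, forall x, h x \in B} -> {in B, forall x, h x \in A} ->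
  #|A| = #|B|.
Proof.
move=> hK hAB hBA; have h_inj := inv_inj hK.
apply/eqP; rewrite eqn_leq -{1}(card_imset A h_inj) -{2}(card_imset B h_inj).
by apply/andP; split; apply/subset_leq_card/subsetP => _ /imsetP[x + ->];
  [apply: hAB | apply: hBA].
Qed.

Lemma sum_card_exchange (I J : finType) (P : pred I) (Q : pred J)
    (R : I -> J -> bool) :
  \sum_(i | P i) #|[set j | Q j && R i j]| = \sum_(j | Q j) #|[set i | P i && R i j]|.
Proof.
under eq_bigr => i _ do rewrite -sum1dep_card.
rewrite (exchange_big_dep Q) => [|i j _ /andP[] //].
by apply: eq_bigr => j Qj; rewrite sum1dep_card; apply: eq_card => i; rewrite !inE Qj.
Qed.

Section ConstrainedMaps.

Variables (n : nat) (d : 'I_n -> nat).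

Definition Fd_ext (cs : seq ('I_n * 'I_n)) : {set {ffun 'I_n -> 'I_n}} :=
  [set f in Fd d | all (fun p => f p.1 == p.2) cs].

Lemma in_Fd_ext cs f :
  (f \in Fd_ext cs) = (f \in Fd d) && all (fun p => f p.1 == p.2) cs.
Proof. by rewrite inE. Qed.

Lemma Fd_comp_perm (s : {perm 'I_n}) f : f \in Fd d -> [ffun z => f (s z)] \in Fd d.
Proof.
rewrite !inE => /forallP fd; apply/forallP => i.
have -> : [set z | [ffun z => f (s z)] z == i] = s @^-1: [set z | f z == i].
  by apply/setP => z; rewrite !inE ffunE.
by rewrite card_preimset //; apply: perm_inj.
Qed.

Lemma card_Fd_ext_swap cs x x' y :
  x \notin unzip1 cs -> x' \notin unzip1 cs ->
  #|[set f in Fd_ext cs | f x == y]| = #|[set f in Fd_ext cs | f x' == y]|.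
Proof.
move=> xS x'S; pose h (f : {ffun 'I_n -> 'I_n}) := [ffun z => f (tperm x x' z)].
have hK : involutive h by move=> f; apply/ffunP => z; rewrite !ffunE tpermK.
have h_ext f : f \in Fd_ext cs -> h f \in Fd_ext cs.
  rewrite !in_Fd_ext => /andP[fF /allP f_cs]; rewrite Fd_comp_perm //=.
  apply/allP => p p_cs; rewrite ffunE tpermD ?f_cs //.
    by apply: contraNneq xS => ->; apply: map_f.
  by apply: contraNneq x'S => ->; apply: map_f.
apply: card_involutive_eq hK _ _ => f; rewrite inE => /andP[/h_ext f_ext fy];
  by rewrite inE f_ext ffunE ?tpermL ?tpermR.
Qed.

Lemma card_fiber_unconstrained cs f y :
  f \in Fd_ext cs -> y \notin unzip2 cs ->
  #|[set x | (x \notin unzip1 cs) && (f x == y)]| = d y.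
Proof.
rewrite in_Fd_ext inE => /andP[/forallP/(_ y)/eqP <- /allP f_cs] yS.
apply: eq_card => x; rewrite !inE andb_idl // => /eqP fx.
apply: contra yS => /mapP[p p_cs xE]; rewrite -fx xE (eqP (f_cs p p_cs)).
exact: map_f.
Qed.

Lemma card_Fd_ext_cons cs x y :
  x \notin unzip1 cs -> uniq (unzip1 cs) -> y \notin unzip2 cs ->
  #|Fd_ext ((x, y) :: cs)| * (n - size cs) = #|Fd_ext cs| * d y.
Proof.
move=> xS uniq_cs yS.
have -> : Fd_ext ((x, y) :: cs) = [set f in Fd_ext cs | f x == y].
  by apply/setP => f; rewrite !inE andbA andbAC.
have card_free : n - size cs = #|[set x' | x' \notin unzip1 cs]|.
  rewrite -[n in n - _]card_ord -(cardC (mem (unzip1 cs))).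
  rewrite (card_uniqP uniq_cs) size_map addKn.
  by apply: eq_card => z; rewrite !inE.
have := sum_card_exchange (fun x' => x' \notin unzip1 cs) (mem (Fd_ext cs))
  (fun x' f => f x' == y).
rewrite (eq_bigr (fun=> #|[set f in Fd_ext cs | f x == y]|)); last first.
  by move=> x' x'S; rewrite (card_Fd_ext_swap y xS x'S).
rewrite [RHS](eq_bigr (fun=> d y)); last by move=> f /card_fiber_unconstrained ->.
by rewrite sum_nat_cond_const sum_nat_const card_free mulnC => ->.
Qed.

Lemma card_Fd_ext cs :
  uniq (unzip1 cs) -> uniq (unzip2 cs) -> size cs <= n ->
  #|Fd_ext cs| * n`! = #|Fd d| * ((n - size cs)`! * \prod_(p <- cs) d p.2).
Proof.
elim: cs => [|[x y] cs IHcs] /=.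
  rewrite big_nil subn0 muln1 => _ _ _; congr (_ * _).
  by apply: eq_card => f; rewrite inE andbT.
move=> /andP[xS uniq1] /andP[yS uniq2] lt_cs_n; rewrite big_cons.
have [m n_cs] : exists m, n - size cs = m.+1 by exists (n - (size cs).+1); rewrite subnSK.
have := card_Fd_ext_cons xS uniq1 yS; have := IHcs uniq1 uniq2 (ltnW lt_cs_n).
rewrite n_cs subnS n_cs /= factS => IH cons.
apply/eqP; rewrite -(eqn_pmul2r (ltn0Sn m)) mulnAC cons mulnAC IH; apply/eqP; ring.
Qed.

Lemma card_Fd_ext_path x s :
  uniq (x :: s) -> size s <= n ->
  #|Fd_ext (zip (belast x s) s)| * n`! =
  #|Fd d| * ((n - size s)`! * \prod_(y <- s) d y).
Proof.
move=> uniq_xs le_s_n; have size_belast_s := size_belast x s.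
have uniq_belast : uniq (belast x s) by move: uniq_xs; rewrite lastI rcons_uniq => /andP[].
rewrite card_Fd_ext ?unzip1_zip ?unzip2_zip ?size_zip ?size_belast_s ?minnn //.
  by rewrite -(big_map snd xpredT) -/(unzip2 _) unzip2_zip ?size_belast_s.
by case/andP: uniq_xs.
Qed.

Lemma card_sixlen_gt_sum v k : k < n ->
  #|[set f in Fd d | k < sixlen f v]| =
  \sum_(t in J k v) #|Fd_ext (zip (belast v (codom t)) (codom t))|.
Proof.
move=> lt_k_n.
pose path_of (f : {ffun 'I_n -> 'I_n}) := [ffun j : 'I_k => iter j.+1 f v].
have sixlen_path (f : {ffun 'I_n -> 'I_n}) :
    (k < sixlen f v) = uniq (v :: codom (path_of f)).
  by rewrite sixlen_gt ?card_ord // codom_iterS.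
rewrite -sum1_card (partition_big path_of (mem (J k v))) /=; last first.
  by move=> f; rewrite inE in_J -sixlen_path => /andP[].
apply: eq_bigr => t; rewrite in_J -sum1_card => uniq_t; apply: eq_bigl => f.
rewrite !inE all_zip_belast_fpath sixlen_path -andbA; congr (_ && _).
apply/andP/idP => [[_ /eqP <-] | fp]; first by rewrite codom_iterS fpath_traject.
have path_t : path_of f = t.
  by apply: codom_ffun_inj; rewrite /= codom_iterS (fpathE fp) size_codom card_ord.
by rewrite path_t uniq_t eqxx.
Qed.

Lemma card_sixlen_gt v k : k < n ->
  #|[set f in Fd d | k < sixlen f v]| * n`! =
  #|Fd d| * ((n - k)`! * \sum_(t in J k v) \prod_(j < k) d (t j)).
Proof.
move=> lt_k_n; rewrite card_sixlen_gt_sum // big_distrl !big_distrr /=.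
apply: eq_bigr => t; rewrite in_J => uniq_t.
have size_t : size (codom t) = k by rewrite size_codom card_ord.
by rewrite card_Fd_ext_path // ?size_t ?(ltnW lt_k_n) // codomE big_map big_enum.
Qed.

Lemma card_Fd_gt0 : degseq d -> 0 < #|Fd d|.
Proof.
move=> dd; pose s := flatten [seq nseq (d i) i | i <- enum 'I_n].
have size_s : size s == n.
  rewrite size_flatten /shape -map_comp (eq_map (fun i => size_nseq (d i) i)).
  by rewrite sumnE big_map big_enum /= dd.
pose t := Tuple size_s.
apply/card_gt0P; exists [ffun x => tnth t x]; rewrite inE; apply/forallP => i.
have -> : #|[set x | [ffun x => tnth t x] x == i]| = count_mem i t.
  rewrite -[in RHS]map_tnth_enum count_map enumT cardE /enum_mem size_filter.
  by apply: eq_count => x; rewrite !inE ffunE.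
apply/eqP; rewrite count_flatten -map_comp (eq_map (fun j => count_nseq _ (d j) j)).
rewrite sumnE big_map big_enum /= (bigD1 i) //= eqxx mul1n big1 ?addn0 // => j.
by rewrite eq_sym => /negbTE->.
Qed.

End ConstrainedMaps.

Theorem lemma3p2 (n : nat) (d : 'I_n -> nat) (v : 'I_n) (k : nat) :
  degseq d -> (2 <= n)%N -> (1 <= k)%N -> (k <= n - 1)%N ->
  prob_sixlen_gt d v k =
  ((((n - k)`!)%:R / (n`!)%:R) *
     \sum_(t in J k v) \prod_(j < k) ((d (t j))%:R : rat))%R.
Proof.
move=> deg_d le2n _ le_k_n1.
have lt_k_n : k < n by rewrite (leq_ltn_trans le_k_n1) // subn1 ltn_predL (ltnW le2n).
have Fd_neq0 : (#|Fd d|%:R : rat) != 0%R by rewrite pnatr_eq0 -lt0n card_Fd_gt0.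
have fact_neq0 : (n`!%:R : rat) != 0%R by rewrite pnatr_eq0 -lt0n fact_gt0.
have /(congr1 (fun m => m%:R : rat)) := card_sixlen_gt d v lt_k_n.
rewrite !natrM natr_sum /prob_sixlen_gt.
under [in X in _ = X -> _]eq_bigr => t _ do rewrite natr_prod.
move=> card_eq; apply: (mulIf fact_neq0); rewrite mulrAC card_eq.
by field; rewrite Fd_neq0 fact_neq0.
Qed.
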